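(* Let $n\in\mathbb{N}$ and consider input sequences $X\in\mathbb{R}^{n\times d_{\text{emb}}}$ with entries bounded in absolute value by $M$. Let $\operatorname{SaturatedAttn}(X;\Gamma_s)$ be a causally masked saturated attention head with parameter norm bounded by $O(1)$, producing outputs $o_1,\dots,o_n\in\mathbb{R}^{d_h}$. Suppose that for each row $i$, if $j\in\mathcal{M}_i$ and $k\le i$, $k\notin\mathcal{M}_i$, then $\mathbf{A}_{ij}-\mathbf{A}_{ik}\ge\delta$ for some $\delta>0$. Then for any $\varepsilon>0$ there exists a standard single-head causal softmax attention function $\operatorname{Attn}(X;\Gamma)$ with parameter norms bounded by $\operatorname{poly}(M,1/\delta,\log n,\log(1/\varepsilon))$ whose outputs $\tilde o_1,\dots,\tilde o_n$ satisfy $\|\tilde o_i - o_i\|_\infty\le\varepsilon$ for all $1\le i\le n$.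
   Context: Saturated masked attention with weights $\Gamma_s=(W_Q,W_K,W_V)$: $\mathbf{A} = XW_Q(XW_K)^\top$, $\mathcal{M}_i = \{j\le i\mid \mathbf{A}_{ij}=\max_{k\le i}\mathbf{A}_{ik}\}$, output $\operatorname{SaturatedAttn}(X;\Gamma_s)_i = \frac{1}{|\mathcal{M}_i|}\sum_{j\in\mathcal{M}_i}X_jW_V$. A causal softmax attention head with parameters $(W_Q',W_K',W_V')$ outputs at row $i$ the vector $\sum_{j\le i}\alpha_{ij}X_jW_V'$ with $\alpha_{ij} = \exp(q_i\cdot k_j)/\sum_{k\le i}\exp(q_i\cdot k_k)$, $q_i = X_iW_Q'$, $k_j = X_jW_K'$. *)

From HB Require Import structures.
From mathcomp Require Import all_boot all_order all_algebra.
From mathcomp Require Import all_classical all_reals all_analysis.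
Set Implicit Arguments. Unset Strict Implicit. Unset Printing Implicit Defensive.
Import Order.TTheory GRing.Theory Num.Theory.
Local Open Scope ring_scope.

Section Attn.
Variable R : realType.

Definition scores n de dk (X : 'M[R]_(n, de)) (WQ WK : 'M[R]_(de, dk)) : 'M[R]_(n, n) :=
  (X *m WQ) *m (X *m WK)^T.

Definition attn_maxset n (A : 'M[R]_(n, n)) (i : 'I_n) : {set 'I_n} :=
  [set j : 'I_n | (j <= i)%N &&
     [forall k : 'I_n, (k <= i)%N ==> (A i k <= A i j)]].

Definition saturated_attn n de dk dh (X : 'M[R]_(n, de))
  (WQ WK : 'M[R]_(de, dk)) (WV : 'M[R]_(de, dh)) : 'M[R]_(n, dh) :=
  \matrix_(i < n, l < dh)
    ((#|attn_maxset (scores X WQ WK) i|%:R)^-1 *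
      \sum_(j in attn_maxset (scores X WQ WK) i) (X *m WV) j l).

Definition softmax_attn n de dk dh (X : 'M[R]_(n, de))
  (WQ WK : 'M[R]_(de, dk)) (WV : 'M[R]_(de, dh)) : 'M[R]_(n, dh) :=
  let A := scores X WQ WK in
  \matrix_(i < n, l < dh)
    \sum_(j < n | (j <= i)%N)
      (expR (A i j) / \sum_(k < n | (k <= i)%N) expR (A i k)) * (X *m WV) j l.

(* parameter norm: max-entry norm bounded by B *)
Definition mx_bounded m p (W : 'M[R]_(m, p)) (B : R) : Prop :=
  forall i j, `|W i j| <= B.

End Attn.

From HB Require Import structures.
From mathcomp Require Import all_boot all_order all_algebra.
From mathcomp Require Import all_classical all_reals all_analysis.
From mathcomp Require Import ring lra.
Import Order.TTheory GRing.Theory Num.Theory.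
Local Open Scope ring_scope.

(* Multiplying the query weights by a temperature lam turns softmax into an almost
   hard maximum: in row i all maximisers of the scores get the same weight e, and by
   the gap hypothesis every other position k <= i gets at most e * exp (- lam * delta).
   Hence the softmax output differs from the uniform average over the maximisers by at
   most 2 V n exp (- lam * delta), where V bounds the entries of X W_V.  The choice
   lam = (ln n + 2 V + ln (1 / eps)) / delta makes this at most eps, and lam times the
   old weights is polynomial in M, 1 / delta, ln n and ln (1 / eps). *)

Lemma average_mix_error {R : realType} (N e Q Sv T V : R) :
  1 <= N -> 0 < e -> 0 <= Q -> `|Sv| <= N * V -> `|T| <= Q * V ->
  `|(e * Sv + T) / (N * e + Q) - N^-1 * Sv| <= 2 * V * (Q / e).
Proof.
move=> N1 e0 Q0 hSv hT.
have N0 : 0 < N by lra.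
have V0 : 0 <= V by rewrite -(pmulr_rge0 _ N0); apply: le_trans hSv.
have Z0 : 0 < N * e + Q by nra.
have -> : (e * Sv + T) / (N * e + Q) - N^-1 * Sv = (N * T - Q * Sv) / (N * (N * e + Q)).
  by field; rewrite !gt_eqF.
have hnum : `|N * T - Q * Sv| <= N * (2 * V * Q).
  apply: le_trans (ler_normB _ _) _.
  rewrite !normrM (gtr0_norm N0) (ger0_norm Q0).
  have := ler_wpM2l (ltW N0) hT; have := ler_wpM2l Q0 hSv; lra.
rewrite normrM normfV (gtr0_norm (mulr_gt0 N0 Z0)) ler_pdivrMr ?mulr_gt0 //.
apply: le_trans hnum _.
have -> : 2 * V * (Q / e) * (N * (N * e + Q)) = N * (2 * V * Q) * ((N * e + Q) / e).
  by field; rewrite gt_eqF.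
rewrite ler_peMr ?mulr_ge0 ?(ltW N0) // ler_pdivlMr // mul1r; nra.
Qed.

Section SoftmaxConcentration.
Context {R : realType} {I : finType} {P : pred I} {A : {set I}} {s v : I -> R}.
Context {delta V : R}.
Hypothesis A_gt0 : (0 < #|A|)%N.
Hypothesis A_sub : forall j, j \in A -> P j.
Hypothesis s_constA : forall j k, j \in A -> k \in A -> s j = s k.
Hypothesis s_gap : forall j k, j \in A -> P k -> k \notin A -> delta <= s j - s k.
Hypothesis v_bounded : forall j, `|v j| <= V.

Lemma big_pred_subsetID (F : I -> R) :
  \sum_(j | P j) F j = \sum_(j in A) F j + \sum_(j | P j && (j \notin A)) F j.
Proof.
rewrite (bigID (mem A)) /=; congr (_ + _).
by apply: eq_bigl => j; case: (boolP (j \in A)) => jA; rewrite ?andbT ?andbF ?A_sub.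
Qed.

Lemma softmax_concentration :
  `|\sum_(j | P j) expR (s j) / (\sum_(k | P k) expR (s k)) * v j
      - (#|A|%:R)^-1 * \sum_(j in A) v j| <= 2 * V * (#|I|%:R * expR (- delta)).
Proof.
have [j0 j0A] := card_gt0P A_gt0.
pose e := expR (s j0).
pose Q := \sum_(k | P k && (k \notin A)) expR (s k).
have expA j : j \in A -> expR (s j) = e by move=> jA; rewrite /e (s_constA _ _ jA j0A).
have Z_eq : \sum_(k | P k) expR (s k) = #|A|%:R * e + Q.
  by rewrite big_pred_subsetID (eq_bigr _ expA) sumr_const mulr_natl.
have num_eq : \sum_(j | P j) expR (s j) / (\sum_(k | P k) expR (s k)) * v j
    = (e * \sum_(j in A) v j + \sum_(j | P j && (j \notin A)) expR (s j) * v j)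
      / (#|A|%:R * e + Q).
  rewrite Z_eq (eq_bigr (fun j => expR (s j) * v j / (#|A|%:R * e + Q))); last first.
    by move=> j _; rewrite mulrAC.
  rewrite -mulr_suml big_pred_subsetID mulr_sumr.
  by congr ((_ + _) * _); apply: eq_bigr => j jA; rewrite expA.
have V0 : 0 <= V := le_trans (normr_ge0 _) (v_bounded j0).
rewrite num_eq; apply: le_trans (@average_mix_error _ _ _ _ _ _ V _ _ _ _ _) _.
- by rewrite ler1n.
- exact: expR_gt0.
- by rewrite /Q sumr_ge0 // => k _; rewrite expR_ge0.
- apply: le_trans (ler_norm_sum _ _ _) _.
  by rewrite mulr_natl -sumr_const ler_sum.
- apply: le_trans (ler_norm_sum _ _ _) _.
  rewrite /Q mulr_suml ler_sum // => k _.
  by rewrite normrM (ger0_norm (expR_ge0 _)) ler_wpM2l ?expR_ge0.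
rewrite ler_wpM2l ?mulr_ge0 // ler_pdivrMr ?expR_gt0 //.
have off_le k : P k && (k \notin A) -> expR (s k) <= expR (- delta) * e.
  case/andP=> Pk kA; rewrite /e -expRD ler_expR.
  by have := s_gap _ _ j0A Pk kA; lra.
apply: le_trans (ler_sum _ off_le) _.
rewrite sumr_const -mulrA mulr_natl ler_wpMn2l ?mulr_ge0 ?expR_ge0 //.
exact: max_card.
Qed.

End SoftmaxConcentration.

Section SaturatedAttention.
Context {R : realType} {n de dk dh : nat}.
Implicit Types (X : 'M[R]_(n, de)) (WQ WK : 'M[R]_(de, dk)) (WV : 'M[R]_(de, dh)).

Lemma scores_scalel X WQ WK (a : R) : scores X (a *: WQ) WK = a *: scores X WQ WK.
Proof. by rewrite /scores -scalemxAr -scalemxAl. Qed.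

Lemma attn_maxset_le {A : 'M[R]_n} {i j : 'I_n} : j \in attn_maxset A i -> (j <= i)%N.
Proof. by rewrite inE => /andP[]. Qed.

Lemma attn_maxset_max {A : 'M[R]_n} {i j : 'I_n} (k : 'I_n) :
  j \in attn_maxset A i -> (k <= i)%N -> A i k <= A i j.
Proof. by rewrite inE => /andP[_ /forallP max_j] ki; exact: implyP (max_j k) ki. Qed.

Lemma attn_maxset_eq {A : 'M[R]_n} {i j k : 'I_n} :
  j \in attn_maxset A i -> k \in attn_maxset A i -> A i j = A i k.
Proof.
move=> jM kM; apply/le_anti.
by rewrite (attn_maxset_max _ jM (attn_maxset_le kM))
           (attn_maxset_max _ kM (attn_maxset_le jM)).
Qed.

Lemma attn_maxset_gt0 (A : 'M[R]_n) i : (0 < #|attn_maxset A i|)%N.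
Proof.
apply/card_gt0P.
case: (@arg_maxP _ _ _ i (fun k : 'I_n => (k <= i)%N) (A i) (leqnn i)) => j ji max_j.
by exists j; rewrite inE ji; apply/forallP => k; apply/implyP => /max_j.
Qed.

Lemma mulmx_bounded {p} {X} {W : 'M[R]_(de, p)} {M C : R} i j :
  mx_bounded X M -> mx_bounded W C -> `|(X *m W) i j| <= de%:R * (M * C).
Proof.
move=> hX hW; rewrite mxE; apply: le_trans (ler_norm_sum _ _ _) _.
rewrite -[de in de%:R]card_ord mulr_natl -sumr_const ler_sum // => t _.
by rewrite normrM ler_pM.
Qed.

Lemma softmax_attn_scalel_error {X WQ WK WV} {lam delta V : R} {i l} :
  0 <= lam -> (forall j, `|(X *m WV) j l| <= V) ->
  (forall j k : 'I_n, j \in attn_maxset (scores X WQ WK) i -> (k <= i)%N ->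
     k \notin attn_maxset (scores X WQ WK) i ->
     delta <= scores X WQ WK i j - scores X WQ WK i k) ->
  `|softmax_attn X (lam *: WQ) WK WV i l - saturated_attn X WQ WK WV i l|
    <= 2 * V * (n%:R * expR (- (lam * delta))).
Proof.
move=> lam0 hV hgap; rewrite /softmax_attn /saturated_attn !mxE scores_scalel.
set S := scores X WQ WK.
have := softmax_concentration (attn_maxset_gt0 S i) (@attn_maxset_le S i) _ _ hV.
rewrite card_ord; apply.
- by move=> j k jM kM; rewrite mxE [RHS]mxE (attn_maxset_eq jM kM).
- by move=> j k jM ki kM; rewrite mxE [X in _ - X]mxE -mulrBr ler_wpM2l ?hgap.
Qed.

End SaturatedAttention.

Lemma weight_le_poly {R : realType} (p c M d l L : R) :
  0 <= p -> 0 <= c -> 0 <= M -> 0 <= d -> 0 <= l -> 0 <= L ->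
  c <= (1 + 2 * p * c) * c * (1 + M + d + l + L) ^+ 2.
Proof.
move=> p0 c0 M0 d0 l0 L0.
have b1 : 1 <= (1 + M + d + l + L) ^+ 2 by apply: exprn_ege1; lra.
rewrite mulrAC mulrC ler_peMr //; apply: le_trans b1 _.
by rewrite ler_peMl ?sqr_ge0 // lerDl !mulr_ge0.
Qed.

Lemma scaled_weight_le_poly {R : realType} (p c M d l L : R) :
  0 <= p -> 0 <= c -> 0 <= M -> 0 <= d -> 0 <= l -> 0 <= L ->
  d * (l + 2 * (p * (M * c)) + L) * c <= (1 + 2 * p * c) * c * (1 + M + d + l + L) ^+ 2.
Proof.
move=> p0 c0 M0 d0 l0 L0.
have pc0 : 0 <= p * c by rewrite mulr_ge0.
have logit_le : l + 2 * (p * (M * c)) + L <= (1 + 2 * p * c) * (1 + M + d + l + L).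
  have : 0 <= 2 * (p * c) * (1 + d + l + L) by rewrite !mulr_ge0 //; lra.
  nra.
rewrite [X in _ <= X](_ : _ = (1 + M + d + l + L) * ((1 + 2 * p * c) * (1 + M + d + l + L)) * c);
  last by ring.
rewrite ler_wpM2r // ler_pM //; last by lra.
by rewrite !addr_ge0 ?mulr_ge0.
Qed.

Lemma temperature_error_le {R : realType} (n : nat) (V L eps : R) :
  (0 < n)%N -> 0 < eps -> ln eps^-1 <= L ->
  2 * V * (n%:R * expR (- (ln n%:R + 2 * V + L))) <= eps.
Proof.
move=> n0 eps0 hL.
have n_gt0 : 0 < n%:R :> R by rewrite ltr0n.
rewrite -addrA opprD expRD expRN lnK ?posrE // mulVKf ?gt_eqF //.
rewrite opprD expRD mulrA.
have val_le1 : 2 * V * expR (- (2 * V)) <= 1.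
  rewrite expRN ler_pdivrMr ?expR_gt0 // mul1r.
  by have := expR_ge1Dx (2 * V); lra.
have exp_le : expR (- L) <= eps.
  by rewrite -[eps in _ <= eps]lnK ?posrE // ler_expR lerNl -lnV ?posrE.
apply: le_trans (ler_wpM2r (expR_ge0 _) val_le1) _.
by rewrite mul1r.
Qed.

Definition saturation_temperature {R : realType} (n de : nat) (M C delta eps : R) : R :=
  delta^-1 * (ln n%:R + 2 * (de%:R * (`|M| * `|C|)) + Num.max 0 (ln eps^-1)).

Lemma saturation_temperature_ge0 {R : realType} {n de : nat} {M C delta eps : R} :
  (0 < n)%N -> 0 < delta -> 0 <= saturation_temperature n de M C delta eps.
Proof.
move=> n0 delta0; apply: mulr_ge0; first by rewrite invr_ge0 ltW.
by rewrite !addr_ge0 ?mulr_ge0 ?ln_ge0 ?ler1n // le_max lexx.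
Qed.

Lemma saturation_temperature_error {R : realType} (n de : nat) (M C delta eps : R) :
  (0 < n)%N -> 0 < delta -> 0 < eps ->
  2 * (de%:R * (`|M| * `|C|))
    * (n%:R * expR (- (saturation_temperature n de M C delta eps * delta))) <= eps.
Proof.
move=> n0 delta0 eps0; rewrite /saturation_temperature [_ * delta]mulrAC mulVf ?gt_eqF // mul1r.
by rewrite temperature_error_le // le_max lexx orbT.
Qed.

Lemma saturation_weights_bounded {R : realType} {n de dk dh : nat} {M C delta : R} (eps : R)
    {X : 'M[R]_(n.+1, de)} {WQ WK : 'M[R]_(de, dk)} {WV : 'M[R]_(de, dh)} :
  mx_bounded X M -> mx_bounded WQ C -> mx_bounded WK C -> mx_bounded WV C ->
  0 < delta ->
  let B := (1 + 2 * de%:R * `|C|) * `|C|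
           * (1 + M + delta^-1 + ln n.+1%:R + Num.max 0 (ln eps^-1)) ^+ 2 in
  [/\ mx_bounded (saturation_temperature n.+1 de M C delta eps *: WQ) B,
      mx_bounded WK B & mx_bounded WV B].
Proof.
move=> hX hQ hK hV delta0 B.
have L0 : 0 <= Num.max 0 (ln eps^-1) :> R by rewrite le_max lexx.
have ln0 : 0 <= ln n.+1%:R :> R by rewrite ln_ge0 // ler1n.
have di0 : 0 <= delta^-1 by rewrite invr_ge0 ltW.
have lam0 : 0 <= saturation_temperature n.+1 de M C delta eps.
  exact: saturation_temperature_ge0 (ltn0Sn n) delta0.
have M0 (t : 'I_de) : 0 <= M := le_trans (normr_ge0 _) (hX ord0 t).
have C_le (t : 'I_de) : `|C| <= B by exact: weight_le_poly (M0 t) di0 ln0 L0.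
split=> t j.
- rewrite mxE normrM (ger0_norm lam0).
  apply: le_trans (ler_wpM2l lam0 (le_trans (hQ t j) (ler_norm C))) _.
  rewrite /saturation_temperature (ger0_norm (M0 t)).
  exact: scaled_weight_le_poly (M0 t) di0 ln0 L0.
- by rewrite (le_trans (hK t j)) ?(le_trans (ler_norm C)) ?C_le.
- by rewrite (le_trans (hV t j)) ?(le_trans (ler_norm C)) ?C_le.
Qed.

Theorem mainTheorem4 (R : realType) (de dk dh : nat) (C : R) :
  exists (K : R) (a : nat),
  forall (n : nat) (M delta eps : R)
         (X : 'M[R]_(n, de)) (WQ WK : 'M[R]_(de, dk)) (WV : 'M[R]_(de, dh)),
    mx_bounded X M ->
    mx_bounded WQ C -> mx_bounded WK C -> mx_bounded WV C ->
    0 < delta ->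
    (forall i j k : 'I_n,
        j \in attn_maxset (scores X WQ WK) i -> (k <= i)%N ->
        k \notin attn_maxset (scores X WQ WK) i ->
        delta <= scores X WQ WK i j - scores X WQ WK i k) ->
    0 < eps ->
    exists (WQ' WK' : 'M[R]_(de, dk)) (WV' : 'M[R]_(de, dh)),
      let B := K * (1 + M + delta^-1 + ln n%:R + Num.max 0 (ln eps^-1)) ^+ a in
      [/\ mx_bounded WQ' B, mx_bounded WK' B, mx_bounded WV' B &
      forall (i : 'I_n) (l : 'I_dh),
        `|softmax_attn X WQ' WK' WV' i l - saturated_attn X WQ WK WV i l| <= eps].
Proof.
exists ((1 + 2 * de%:R * `|C|) * `|C|), 2%N.
move=> [|n] M delta eps X WQ WK WV hX hQ hK hV delta0 hgap eps0.
  (* Without rows nothing forces [0 <= M], so take zero weights. *)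
  exists 0, 0, 0 => B.
  have B0 : 0 <= B by apply: mulr_ge0; rewrite ?sqr_ge0 // mulr_ge0 // addr_ge0 // !mulr_ge0.
  by split=> [t j|t j|t j|[]]; rewrite ?mxE ?normr0.
pose lam := saturation_temperature n.+1 de M C delta eps.
exists (lam *: WQ), WK, WV => B.
have [hQ' hK' hV'] := saturation_weights_bounded eps hX hQ hK hV delta0.
split=> // i l.
have hXV j : `|(X *m WV) j l| <= de%:R * (`|M| * `|C|).
  by apply: mulmx_bounded => t u; rewrite (le_trans _ (ler_norm _)) ?hX ?hV.
have lam0 : 0 <= lam := saturation_temperature_ge0 (ltn0Sn n) delta0.
apply: le_trans (softmax_attn_scalel_error lam0 hXV (hgap i)) _.
exact: saturation_temperature_error.
Qed.
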